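(* Let $(\omega,c)\in\mathbb{R}^2$ satisfy: $\omega>c^2/4$, or $\omega=c^2/4$ and $c>0$. Then $$\lim_{L\to\infty}\bigl\|\Phi^L_{\omega,c}\bigr\|^2_{L^2(\mathbb{T}_{2L})}=\bigl\|\Phi_{\omega,c}\bigr\|^2_{L^2(\mathbb{R})}.$$
   Context: $\mathbb{T}_{2L}=\mathbb{R}/2L\mathbb{Z}\simeq[-L,L]$. Set $\alpha_0=\tfrac13(4c+\sqrt{48\omega+4c^2})$, $\alpha_1=4\sqrt\omega+2c$, $A(x)=-3x^2+8cx+64\omega$, $L_0(\omega,c)=2\pi/\sqrt{\alpha_0\sqrt{A(\alpha_0)}}$. For $\eta_3\in(\alpha_0,\alpha_1)$ put $\eta_1=\frac{-\eta_3+4c-\sqrt{A(\eta_3)}}{2}$, $\eta_2=\frac{-\eta_3+4c+\sqrt{A(\eta_3)}}{2}$, $k^2=\frac{-\eta_1(\eta_3-\eta_2)}{\eta_3(\eta_2-\eta_1)}\in(0,1)$, $g=\frac{2}{\sqrt{\eta_3(\eta_2-\eta_1)}}$, $\beta^2=-\eta_3k^2/\eta_1$, $T(\eta_3)=4gK(k)$ with $K(k)=\int_0^{\pi/2}(1-k^2\sin^2\theta)^{-1/2}d\theta$. The map $T$ is a strictly increasing bijection of $(\alpha_0,\alpha_1)$ onto $(2L_0,\infty)$; for $L>L_0$ let $\eta_3$ satisfy $T(\eta_3)=2L$, and let $\Phi^L_{\omega,c}>0$ be the $2L$-periodic function with $(\Phi^L_{\omega,c}(x))^2=\eta_3\,\mathrm{dn}^2(\frac{x}{2g};k)/(1+\beta^2\mathrm{sn}^2(\frac{x}{2g};k))$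 on $[-L,L]$ ($\mathrm{sn},\mathrm{dn}$ Jacobi elliptic functions of modulus $k$). $\Phi_{\omega,c}>0$ on $\mathbb{R}$ is given by $\Phi_{\omega,c}^2(x)=\frac{4\omega-c^2}{\sqrt\omega(\cosh(\sqrt{4\omega-c^2}x)-\frac{c}{2\sqrt\omega})}$ if $\omega>c^2/4$, and $\Phi_{\omega,c}^2(x)=\frac{4c}{(cx)^2+1}$ if $\omega=c^2/4,\ c>0$. *)

From Stdlib Require Import Reals ClassicalEpsilon.
From Coquelicot Require Import Coquelicot.
Open Scope R_scope.

(* The parameter m stands for k^2 (0 <= m < 1). *)

Definition ellipF (phi m : R) : R :=
  RInt (fun th => / sqrt (1 - m * (sin th) ^ 2)) 0 phi.

Definition ellipK (m : R) : R := ellipF (PI / 2) m.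

(* Jacobi amplitude: the inverse of phi |-> F(phi | m)
   (a strictly increasing bijection of R onto R when 0 <= m < 1). *)
Definition jacobi_am (u m : R) : R :=
  epsilon (inhabits 0) (fun phi => ellipF phi m = u).

Definition jacobi_sn (u m : R) : R := sin (jacobi_am u m).
Definition jacobi_dn (u m : R) : R := sqrt (1 - m * (jacobi_sn u m) ^ 2).

Definition alpha0 (w c : R) : R := (4 * c + sqrt (48 * w + 4 * c ^ 2)) / 3.
Definition alpha1 (w c : R) : R := 4 * sqrt w + 2 * c.
Definition Apoly (w c x : R) : R := - 3 * x ^ 2 + 8 * c * x + 64 * w.
Definition L0 (w c : R) : R :=
  2 * PI / sqrt (alpha0 w c * sqrt (Apoly w c (alpha0 w c))).

Definition eta1 (w c e3 : R) : R := (- e3 + 4 * c - sqrt (Apoly w c e3)) / 2.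
Definition eta2 (w c e3 : R) : R := (- e3 + 4 * c + sqrt (Apoly w c e3)) / 2.
Definition ksq (w c e3 : R) : R :=
  (- eta1 w c e3 * (e3 - eta2 w c e3)) / (e3 * (eta2 w c e3 - eta1 w c e3)).
Definition gpar (w c e3 : R) : R := 2 / sqrt (e3 * (eta2 w c e3 - eta1 w c e3)).
Definition betasq (w c e3 : R) : R := - e3 * ksq w c e3 / eta1 w c e3.
Definition Tper (w c e3 : R) : R := 4 * gpar w c e3 * ellipK (ksq w c e3).

(* For L > L0, the eta3 in (alpha0, alpha1) with T(eta3) = 2L
   (unique, since T is a strictly increasing bijection). *)
Definition eta3L (w c L : R) : R :=
  epsilon (inhabits 0)
    (fun e => alpha0 w c < e < alpha1 w c /\ Tper w c e = 2 * L).

(* The positive periodic wave Phi^L_{w,c}; the formula below is 2L-periodic,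
   and on [-L, L] it is the function of the paper. *)
Definition PhiL (w c L x : R) : R :=
  let e3 := eta3L w c L in
  let m := ksq w c e3 in
  let u := x / (2 * gpar w c e3) in
  sqrt (e3 * (jacobi_dn u m) ^ 2 / (1 + betasq w c e3 * (jacobi_sn u m) ^ 2)).

(* ||Phi^L||^2_{L^2(T_{2L})}, T_{2L} identified with [-L, L]. *)
Definition normL2_PhiL_sq (w c L : R) : R :=
  RInt (fun x => (PhiL w c L x) ^ 2) (- L) L.

Definition Phi_sq (w c x : R) : R :=
  if Rlt_dec (c ^ 2 / 4) w then
    (4 * w - c ^ 2) /
      (sqrt w * (cosh (sqrt (4 * w - c ^ 2) * x) - c / (2 * sqrt w)))
  else 4 * c / ((c * x) ^ 2 + 1).

Definition Phi (w c x : R) : R := sqrt (Phi_sq w c x).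

(* Substituting x = 2 g F(phi | k^2) turns ||Phi^L||^2 into
   2 g eta3 * int_{-PI/2}^{PI/2} sqrt (1 - k^2 sin^2) / (1 + beta^2 sin^2), which differs from
   2 g eta3 * int cos / (1 + beta^2 sin^2) = 4 g eta3 atan beta / beta by at most
   2 PI g eta3 sqrt (1 - k^2) / beta^2.  Expressed in eta3, the main term and the error bound
   are continuous up to alpha1, where the error vanishes since eta2(alpha1) = 0.  The period
   equation T(eta3) = 2L forces eta3 -> alpha1 as L -> oo: T is continuous, hence bounded on
   every [alpha0, b] with b < alpha1, and unbounded near alpha1.  So the norms converge to the
   main term at alpha1, namely 8 atan (a / (2 sqrt w - c)) with a = sqrt (4 w - c^2), or 4 PI
   when w = c^2/4.  The antiderivatives 4 atan (a / (2 sqrt w - c) * tanh (a x / 2)) and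
   4 atan (c x) of Phi^2 show that ||Phi||^2 has the same value. *)

From Stdlib Require Import Reals Lra Psatz ClassicalEpsilon.
From Coquelicot Require Import Coquelicot.
Open Scope R_scope.

Lemma continuous_pow_comp (f : R -> R) (n : nat) (x : R) :
  continuous f x -> continuous (fun y => f y ^ n) x.
Proof.
  intros Hf; induction n as [|n IH]; simpl.
  - apply continuous_const.
  - exact (continuous_mult f (fun y => f y ^ n) x Hf IH).
Qed.

Create HintDb continuity_atoms.

Ltac continuity_step :=
  lazymatch goal with
  | |- continuous (fun _ => ?c) _ => apply (continuous_const c)
  | |- continuous (fun y => y) _ => apply continuous_id
  | |- continuous (fun y => @?f y + @?g y) _ => apply (continuous_plus f g)
  | |- continuous (fun y => @?f y - @?g y) _ => apply (continuous_minus f g)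
  | |- continuous (fun y => @?f y * @?g y) _ => apply (continuous_mult f g)
  | |- continuous (fun y => @?f y / @?g y) _ =>
      apply (continuous_mult f (fun y => / g y))
  | |- continuous (fun y => - @?f y) _ => apply (continuous_opp f)
  | |- continuous (fun y => / @?f y) _ => apply (continuous_Rinv_comp f)
  | |- continuous (fun y => sqrt (@?f y)) _ => apply (continuous_sqrt_comp f)
  | |- continuous (fun y => atan (@?f y)) _ => apply (continuous_atan_comp f)
  | |- continuous (fun y => sin (@?f y)) _ => apply (continuous_sin_comp f)
  | |- continuous (fun y => cos (@?f y)) _ => apply (continuous_cos_comp f)
  | |- continuous (fun y => exp (@?f y)) _ => apply (continuous_exp_comp f)
  | |- continuous (fun y => @?f y ^ ?n) _ => apply (continuous_pow_comp f n)
  | |- continuous _ _ => solve [eauto with continuity_atoms]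
  end.

(* Leaves the side conditions [_ <> 0] of divisions and inverses. *)
Ltac solve_continuous := repeat (match goal with |- continuous _ _ => continuity_step end).

Lemma continuous_locally_lt (f : R -> R) (x y : R) :
  continuous f x -> f x < y -> locally x (fun z => f z < y).
Proof. intros Hf Hy. exact (Hf _ (open_lt y (f x) Hy)). Qed.

Lemma continuous_locally_gt (f : R -> R) (x y : R) :
  continuous f x -> y < f x -> locally x (fun z => y < f z).
Proof. intros Hf Hy. exact (Hf _ (open_gt y (f x) Hy)). Qed.

Lemma locally_left_point (P : R -> Prop) (a x : R) :
  a < x -> locally x P -> exists e, a < e < x /\ P e.
Proof.
  intros Hax [d Hd].
  set (t := Rmin d (x - a)).
  assert (Ht : 0 < t) by (apply Rmin_glb_lt; [apply cond_pos | lra]).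
  assert (Htd : t <= d) by apply Rmin_l.
  assert (Hta : t <= x - a) by apply Rmin_r.
  exists (x - t / 2); split; [lra |].
  apply Hd. change (Rabs (x - t / 2 - x) < d). rewrite Rabs_left; lra.
Qed.

(** * Elliptic integrals and the Jacobi amplitude *)

Definition ellip_integrand (m th : R) : R := / sqrt (1 - m * sin th ^ 2).

Lemma sin_sq_bound th : 0 <= sin th ^ 2 <= 1.
Proof. pose proof (SIN_bound th). split; [apply pow2_ge_0 | nra]. Qed.

Lemma ellip_radicand_pos m th : m < 1 -> 0 < 1 - m * sin th ^ 2.
Proof. intros Hm. pose proof (sin_sq_bound th). destruct (Rle_lt_dec m 0); nra. Qed.

Lemma continuous_ellip_integrand m th : m < 1 -> continuous (ellip_integrand m) th.
Proof.
  intros Hm. unfold ellip_integrand. solve_continuous.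
  apply Rgt_not_eq, sqrt_lt_R0, ellip_radicand_pos, Hm.
Qed.

Lemma ex_RInt_ellip_integrand m a b : m < 1 -> ex_RInt (ellip_integrand m) a b.
Proof.
  intros Hm. apply (@ex_RInt_continuous R_CompleteNormedModule).
  intros; apply continuous_ellip_integrand, Hm.
Qed.

Lemma ellip_integrand_ge_1 m th : 0 <= m < 1 -> 1 <= ellip_integrand m th.
Proof.
  intros Hm. unfold ellip_integrand.
  pose proof (ellip_radicand_pos m th (proj2 Hm)).
  pose proof (sin_sq_bound th).
  assert (sqrt (1 - m * sin th ^ 2) <= 1).
  { rewrite <- sqrt_1 at 2. apply sqrt_le_1_alt. nra. }
  rewrite <- Rinv_1 at 1. apply Rinv_le_contravar; [apply sqrt_lt_R0 |]; lra.
Qed.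

Lemma ellip_integrand_opp m th : ellip_integrand m (- th) = ellip_integrand m th.
Proof. unfold ellip_integrand. rewrite sin_neg. f_equal. f_equal. ring. Qed.

Lemma is_derive_ellipF m phi : m < 1 ->
  is_derive (fun p => ellipF p m) phi (ellip_integrand m phi).
Proof.
  intros Hm. apply (is_derive_RInt (ellip_integrand m) (fun p => ellipF p m) 0 phi).
  - apply filter_forall. intros b. apply (@RInt_correct R_CompleteNormedModule).
    apply ex_RInt_ellip_integrand, Hm.
  - apply continuous_ellip_integrand, Hm.
Qed.

Lemma continuous_ellipF m phi : m < 1 -> continuous (fun p => ellipF p m) phi.
Proof.
  intros Hm. apply (@ex_derive_continuous R_AbsRing R_NormedModule).
  eexists. apply is_derive_ellipF, Hm.
Qed.

Lemma ellipF_0 m : ellipF 0 m = 0.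
Proof. exact (@RInt_point R_CompleteNormedModule 0 (ellip_integrand m)). Qed.

Lemma ellipF_sub m a b : m < 1 ->
  ellipF b m - ellipF a m = RInt (ellip_integrand m) a b.
Proof.
  intros Hm.
  change (RInt (ellip_integrand m) 0 b - RInt (ellip_integrand m) 0 a
          = RInt (ellip_integrand m) a b).
  rewrite <- (RInt_Chasles (ellip_integrand m) 0 a b)
    by apply ex_RInt_ellip_integrand, Hm.
  unfold plus; simpl; ring.
Qed.

Lemma ellipF_sub_ge m a b : 0 <= m < 1 -> a <= b -> b - a <= ellipF b m - ellipF a m.
Proof.
  intros Hm Hab. rewrite ellipF_sub by lra.
  replace (b - a) with (RInt (fun _ => 1) a b)
    by (rewrite RInt_const; unfold scal; simpl; unfold mult; simpl; ring).
  apply RInt_le; auto.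
  - apply ex_RInt_const.
  - apply ex_RInt_ellip_integrand; lra.
  - intros; apply ellip_integrand_ge_1, Hm.
Qed.

Lemma ellipF_opp m phi : m < 1 -> ellipF (- phi) m = - ellipF phi m.
Proof.
  intros Hm. change (RInt (ellip_integrand m) 0 (- phi) = - RInt (ellip_integrand m) 0 phi).
  pose proof (is_RInt_comp_opp (ellip_integrand m) 0 phi
    (RInt (ellip_integrand m) 0 (- phi))) as H.
  rewrite Ropp_0 in H.
  specialize (H (RInt_correct _ _ _ (ex_RInt_ellip_integrand m 0 (- phi) Hm))).
  apply (@is_RInt_unique R_CompleteNormedModule) in H.
  rewrite <- H, <- (RInt_opp (ellip_integrand m))
    by apply ex_RInt_ellip_integrand, Hm.
  apply RInt_ext. intros. unfold opp; simpl. rewrite ellip_integrand_opp. ring.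
Qed.

Lemma ellipF_surjective m u : 0 <= m < 1 -> exists phi, ellipF phi m = u.
Proof.
  intros Hm.
  assert (Hc : forall x, continuous (fun p => ellipF p m) x)
    by (intros; apply continuous_ellipF; lra).
  destruct (Rle_lt_dec 0 u) as [Hu | Hu].
  - pose proof (ellipF_sub_ge m 0 u Hm Hu). rewrite ellipF_0 in *.
    destruct (IVT_gen_consistent (fun p => ellipF p m) 0 u u Hc) as [x [_ Hx]]; eauto.
    rewrite ellipF_0, Rmin_left, Rmax_right; lra.
  - pose proof (ellipF_sub_ge m u 0 Hm (Rlt_le _ _ Hu)). rewrite ellipF_0 in *.
    destruct (IVT_gen_consistent (fun p => ellipF p m) u 0 u Hc) as [x [_ Hx]]; eauto.
    rewrite ellipF_0, Rmin_left, Rmax_right; lra.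
Qed.

Lemma ellipF_jacobi_am u m : 0 <= m < 1 -> ellipF (jacobi_am u m) m = u.
Proof.
  intros Hm. apply (epsilon_spec (inhabits 0) (fun phi => ellipF phi m = u)).
  apply ellipF_surjective, Hm.
Qed.

Lemma jacobi_am_ellipF phi m : 0 <= m < 1 -> jacobi_am (ellipF phi m) m = phi.
Proof.
  intros Hm. set (a := jacobi_am _ m).
  assert (Ha : ellipF a m = ellipF phi m) by apply ellipF_jacobi_am, Hm.
  destruct (Rtotal_order a phi) as [H | [H | H]]; auto.
  - pose proof (ellipF_sub_ge m a phi Hm (Rlt_le _ _ H)); lra.
  - pose proof (ellipF_sub_ge m phi a Hm (Rlt_le _ _ H)); lra.
Qed.

Lemma jacobi_am_1_lipschitz u v m : 0 <= m < 1 ->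
  Rabs (jacobi_am u m - jacobi_am v m) <= Rabs (u - v).
Proof.
  intros Hm. pose proof (ellipF_jacobi_am u m Hm). pose proof (ellipF_jacobi_am v m Hm).
  set (a := jacobi_am u m) in *. set (b := jacobi_am v m) in *.
  destruct (Rle_lt_dec a b) as [Hab | Hab].
  - pose proof (ellipF_sub_ge m a b Hm Hab). rewrite !Rabs_left1; lra.
  - pose proof (ellipF_sub_ge m b a Hm (Rlt_le _ _ Hab)). rewrite !Rabs_right; lra.
Qed.

Lemma continuous_jacobi_am m u : 0 <= m < 1 -> continuous (fun v => jacobi_am v m) u.
Proof.
  intros Hm. apply continuity_pt_filterlim.
  intros eps He. exists eps; split; auto. intros x [_ Hx].
  eapply Rle_lt_trans; [apply jacobi_am_1_lipschitz, Hm | exact Hx].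
Qed.

Lemma ellip_integrand_sub_le m m0 th k : 0 < k <= 1 ->
  k <= 1 - m * sin th ^ 2 -> k <= 1 - m0 * sin th ^ 2 ->
  Rabs (ellip_integrand m th - ellip_integrand m0 th) <= Rabs (m - m0) / (2 * k ^ 3).
Proof.
  intros Hk Hx Hy. unfold ellip_integrand.
  set (x := 1 - m * sin th ^ 2) in *. set (y := 1 - m0 * sin th ^ 2) in *.
  set (X := sqrt x). set (Y := sqrt y).
  assert (HX2 : X * X = x) by (apply sqrt_sqrt; lra).
  assert (HY2 : Y * Y = y) by (apply sqrt_sqrt; lra).
  assert (HX0 : 0 <= X) by apply sqrt_pos. assert (HY0 : 0 <= Y) by apply sqrt_pos.
  assert (HXk : k <= X) by nra. assert (HYk : k <= Y) by nra.
  pose proof (sin_sq_bound th) as Hs. pose proof (Rabs_pos (m - m0)).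
  replace (/ X - / Y) with ((Y - X) / (X * Y)) by (field; lra).
  rewrite Rabs_div, (Rabs_right (X * Y)) by nra.
  (* (Y - X)(X + Y) = (m - m0) sin^2 th and X + Y >= 2k *)
  assert (Hprod : Rabs (Y - X) * (X + Y) = Rabs (m - m0) * sin th ^ 2).
  { rewrite <- (Rabs_right (X + Y)), <- (Rabs_right (sin th ^ 2)), <- !Rabs_mult by lra.
    f_equal. unfold x, y in *. nra. }
  assert (Hdiff : Rabs (Y - X) <= Rabs (m - m0) / (2 * k)).
  { assert (Rabs (m - m0) * sin th ^ 2 <= Rabs (m - m0)) by nra.
    apply (Rmult_le_reg_r (2 * k)); [lra |]. field_simplify; [nra | lra]. }
  apply Rle_trans with (Rabs (m - m0) / (2 * k) / (k * k)); [| right; field; lra].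
  apply Rle_trans with (Rabs (m - m0) / (2 * k) / (X * Y)).
  - apply Rmult_le_compat_r; [left; apply Rinv_0_lt_compat; nra | exact Hdiff].
  - apply Rmult_le_compat_l; [apply Rle_mult_inv_pos; lra |].
    apply Rinv_le_contravar; nra.
Qed.

Lemma ellipK_sub_le m m0 k : 0 < k <= 1 -> m < 1 -> m0 < 1 ->
  (forall t, k <= 1 - m * sin t ^ 2) -> (forall t, k <= 1 - m0 * sin t ^ 2) ->
  Rabs (ellipK m - ellipK m0) <= PI / 2 * (Rabs (m - m0) / (2 * k ^ 3)).
Proof.
  intros Hk Hm Hm0 Hlow Hlow0. pose proof PI_RGT_0.
  assert (Hex : forall m', m' < 1 -> ex_RInt (ellip_integrand m') 0 (PI / 2))
    by (intros; apply ex_RInt_ellip_integrand; auto).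
  change (Rabs (RInt (ellip_integrand m) 0 (PI / 2) - RInt (ellip_integrand m0) 0 (PI / 2))
    <= PI / 2 * (Rabs (m - m0) / (2 * k ^ 3))).
  pose proof (RInt_minus (V := R_CompleteNormedModule) (ellip_integrand m) (ellip_integrand m0)
    0 (PI / 2) (Hex m Hm) (Hex m0 Hm0)) as E.
  unfold minus, plus, opp in E; simpl in E. unfold Rminus at 1. rewrite <- E.
  apply Rle_trans with ((PI / 2 - 0) * (Rabs (m - m0) / (2 * k ^ 3))); [| right; ring].
  apply abs_RInt_le_const; [lra | | intros t _; apply ellip_integrand_sub_le; auto].
  apply (ex_RInt_minus (V := R_CompleteNormedModule)); auto.
Qed.

Lemma continuous_ellipK m0 : m0 < 1 -> continuous ellipK m0.
Proof.
  intros Hm0. apply continuity_pt_filterlim.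
  set (k := Rmin 1 ((1 - m0) / 2)).
  assert (Hk : 0 < k <= 1) by (split; [apply Rmin_glb_lt; lra | apply Rmin_l]).
  assert (Hk2 : k <= (1 - m0) / 2) by apply Rmin_r.
  assert (Hk3 : 0 < k ^ 3) by (apply pow_lt; lra).
  assert (Hlow : forall m' t, m' <= (1 + m0) / 2 -> k <= 1 - m' * sin t ^ 2).
  { intros m' t Hm'. pose proof (sin_sq_bound t). destruct (Rle_lt_dec m' 0); nra. }
  pose proof PI_RGT_0.
  intros eps He. exists (Rmin ((1 - m0) / 2) (eps * k ^ 3 / PI)). split.
  { apply Rmin_glb_lt; [lra | apply Rdiv_lt_0_compat; nra]. }
  intros m [_ Hm]. simpl in Hm. unfold R_dist in Hm.
  assert (Hm1 : Rabs (m - m0) < (1 - m0) / 2)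
    by (eapply Rlt_le_trans; [apply Hm | apply Rmin_l]).
  assert (Hm2 : Rabs (m - m0) < eps * k ^ 3 / PI)
    by (eapply Rlt_le_trans; [apply Hm | apply Rmin_r]).
  pose proof (Rle_abs (m - m0)).
  change (Rabs (ellipK m - ellipK m0) < eps).
  eapply Rle_lt_trans.
  { apply (ellipK_sub_le m m0 k); try assumption; try lra; intros t; apply Hlow; lra. }
  apply Rle_lt_trans with (PI / 2 * (eps * k ^ 3 / PI / (2 * k ^ 3))).
  - apply Rmult_le_compat_l; [lra |].
    apply Rmult_le_compat_r; [left; apply Rinv_0_lt_compat |]; lra.
  - field_simplify; lra.
Qed.

Lemma ellipK_ge_PI2 m : 0 <= m < 1 -> PI / 2 <= ellipK m.
Proof.
  intros Hm. pose proof PI_RGT_0.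
  pose proof (ellipF_sub_ge m 0 (PI / 2) Hm ltac:(lra)). rewrite ellipF_0 in *.
  unfold ellipK; lra.
Qed.

(* sqrt (1 - m sin^2 t) <= cos t + sqrt (1 - m) <= PI/2 - t + sqrt (1 - m) on [0, PI/2],
   and 1/(PI/2 - t + r) integrates to ln ((PI/2 + r) / r). *)
Lemma ellipK_ge_ln m : 0 < m < 1 -> - ln (sqrt (1 - m)) <= ellipK m.
Proof.
  intros Hm. set (r := sqrt (1 - m)).
  assert (Hr : 0 < r) by (apply sqrt_lt_R0; lra).
  assert (Hr2 : r * r = 1 - m) by (apply sqrt_sqrt; lra).
  pose proof PI_RGT_0 as Hpi. pose proof PI2_1 as Hpi1.
  set (F := fun t => - ln (PI / 2 - t + r)).
  assert (HI : is_RInt (fun t => / (PI / 2 - t + r)) 0 (PI / 2) (minus (F (PI / 2)) (F 0))).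
  { apply (@is_RInt_derive R_CompleteNormedModule F);
      intros x Hx; rewrite Rmin_left, Rmax_right in Hx by lra.
    - unfold F. auto_derive; [lra |]. field. lra.
    - solve_continuous. lra. }
  apply Rle_trans with (minus (F (PI / 2)) (F 0)).
  { unfold F, minus, plus, opp; simpl.
    replace (PI / 2 - PI / 2 + r) with r by ring.
    replace (PI / 2 - 0 + r) with (PI / 2 + r) by ring.
    assert (0 <= ln (PI / 2 + r)) by (rewrite <- ln_1; apply ln_le; lra).
    lra. }
  rewrite <- (is_RInt_unique _ _ _ _ HI).
  apply RInt_le; [lra | eexists; exact HI | apply ex_RInt_ellip_integrand; lra |].
  intros t Ht. unfold ellip_integrand.
  pose proof (ellip_radicand_pos m t ltac:(lra)).
  apply Rinv_le_contravar; [apply sqrt_lt_R0; auto |].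
  assert (HC : 0 <= cos t) by (apply cos_ge_0; lra).
  assert (Hcs : cos t <= PI / 2 - t).
  { rewrite <- sin_shift. destruct (Req_dec t (PI / 2)) as [-> | Ht2].
    - rewrite Rminus_diag, sin_0. lra.
    - left; apply sin_lt_x; lra. }
  assert (sqrt (1 - m * sin t ^ 2) <= cos t + r).
  { rewrite <- (sqrt_Rsqr (cos t + r)) by lra. apply sqrt_le_1_alt.
    pose proof (sin2_cos2 t). unfold Rsqr in *. simpl. nra. }
  lra.
Qed.

(** * The L2 norm of a cnoidal profile *)

Definition cnoidal_integrand (m b2 p : R) : R :=
  sqrt (1 - m * sin p ^ 2) / (1 + b2 * sin p ^ 2).

Lemma sn_denominator_pos b2 p : 0 <= b2 -> 0 < 1 + b2 * sin p ^ 2.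
Proof. intros Hb. pose proof (sin_sq_bound p). nra. Qed.

Lemma ex_RInt_cnoidal_integrand m b2 a b : 0 <= b2 -> ex_RInt (cnoidal_integrand m b2) a b.
Proof.
  intros Hb. apply (@ex_RInt_continuous R_CompleteNormedModule). intros p _.
  unfold cnoidal_integrand. solve_continuous. apply Rgt_not_eq, sn_denominator_pos, Hb.
Qed.

(* The substitution x = 2 g F(p | m) turns jacobi_sn into sin and jacobi_dn into
   sqrt (1 - m sin^2), and dx = 2 g dp / sqrt (1 - m sin^2). *)
Lemma RInt_cnoidal_profile e m b2 g : 0 < g -> 0 <= m < 1 -> 0 <= b2 ->
  RInt (fun x => e * jacobi_dn (x / (2 * g)) m ^ 2 / (1 + b2 * jacobi_sn (x / (2 * g)) m ^ 2))
    (- (2 * g * ellipK m)) (2 * g * ellipK m)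
  = 2 * g * e * RInt (cnoidal_integrand m b2) (- (PI / 2)) (PI / 2).
Proof.
  intros Hg Hm Hb.
  set (P := fun p => e * sqrt (1 - m * sin p ^ 2) ^ 2 / (1 + b2 * sin p ^ 2)).
  assert (HP : forall x, continuous P x).
  { intros x. unfold P. solve_continuous. apply Rgt_not_eq, sn_denominator_pos, Hb. }
  rewrite (RInt_ext _ (fun x => P (jacobi_am (x / (2 * g)) m))) by reflexivity.
  replace (- (2 * g * ellipK m)) with (2 * g * ellipF (- (PI / 2)) m)
    by (rewrite ellipF_opp by lra; unfold ellipK; ring).
  unfold ellipK.
  rewrite <- (RInt_comp (fun x => P (jacobi_am (x / (2 * g)) m))
                       (fun p => 2 * g * ellipF p m) (fun p => 2 * g * ellip_integrand m p)).
  - change (2 * g * e * RInt (cnoidal_integrand m b2) (- (PI / 2)) (PI / 2))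
      with (scal (2 * g * e) (RInt (cnoidal_integrand m b2) (- (PI / 2)) (PI / 2))).
    rewrite <- RInt_scal by apply ex_RInt_cnoidal_integrand, Hb.
    apply RInt_ext. intros p _.
    replace (2 * g * ellipF p m / (2 * g)) with (ellipF p m) by (field; lra).
    rewrite jacobi_am_ellipF by exact Hm.
    unfold scal; simpl; unfold mult; simpl.
    unfold P, cnoidal_integrand, ellip_integrand.
    pose proof (ellip_radicand_pos m p (proj2 Hm)) as Hrad.
    pose proof (sn_denominator_pos b2 p Hb).
    pose proof (sqrt_lt_R0 _ Hrad).
    rewrite pow2_sqrt by lra.
    rewrite <- (sqrt_sqrt (1 - m * sin p ^ 2)) at 2 by lra.
    field. split; lra.
  - intros x _.
    apply (continuous_comp (fun x => jacobi_am (x / (2 * g)) m) P); [| apply HP].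
    apply (continuous_comp (fun x => x / (2 * g)) (fun u => jacobi_am u m)).
    + solve_continuous.
    + apply continuous_jacobi_am, Hm.
  - intros x _. split.
    + apply (is_derive_scal (fun p => ellipF p m)), is_derive_ellipF. lra.
    + apply (continuous_mult (fun _ => 2 * g)); [apply continuous_const |].
      apply continuous_ellip_integrand. lra.
Qed.

Lemma is_RInt_cos_div b2 : 0 < b2 ->
  is_RInt (fun p => cos p / (1 + b2 * sin p ^ 2)) (- (PI / 2)) (PI / 2)
    (2 * atan (sqrt b2) / sqrt b2).
Proof.
  intros Hb. set (be := sqrt b2).
  assert (Hbe : 0 < be) by (apply sqrt_lt_R0; auto).
  assert (Hbe2 : be * be = b2) by (apply sqrt_sqrt; lra).
  set (F := fun p => atan (be * sin p) / be).
  replace (2 * atan be / be) with (minus (F (PI / 2)) (F (- (PI / 2)))).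
  2:{ unfold F, minus, plus, opp; simpl. rewrite sin_neg, sin_PI2.
      replace (be * - (1)) with (- be) by ring. rewrite atan_opp, Rmult_1_r. field. lra. }
  apply (@is_RInt_derive R_CompleteNormedModule); intros p _.
  - unfold F. auto_derive; [lra |].
    pose proof (sn_denominator_pos b2 p (Rlt_le _ _ Hb)).
    rewrite <- Hbe2 in *. field. split; nra.
  - solve_continuous. apply Rgt_not_eq, sn_denominator_pos. lra.
Qed.

(* sqrt (1 - m s^2) - cos p is at most sqrt (1 - m) * s^2, since the product with
   sqrt (1 - m s^2) + cos p >= sqrt (1 - m) equals (1 - m) s^2. *)
Lemma cnoidal_integrand_sub_cos_le m b2 p : 0 < m < 1 -> 0 < b2 -> - (PI / 2) <= p <= PI / 2 ->
  Rabs (cnoidal_integrand m b2 p - cos p / (1 + b2 * sin p ^ 2)) <= sqrt (1 - m) / b2.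
Proof.
  intros Hm Hb Hp. unfold cnoidal_integrand.
  pose proof (sn_denominator_pos b2 p (Rlt_le _ _ Hb)) as Hden.
  set (s := sin p) in *. set (C := cos p).
  assert (HC : 0 <= C) by (apply cos_ge_0; lra).
  assert (HCs : C * C = 1 - s * s)
    by (pose proof (sin2_cos2 p); unfold Rsqr in *; unfold C, s; lra).
  assert (Hs : 0 <= s ^ 2 <= 1) by apply sin_sq_bound.
  assert (Hy : 0 < 1 - m * s ^ 2) by (apply ellip_radicand_pos; lra).
  set (a := sqrt (1 - m * s ^ 2)).
  assert (Ha : a * a = 1 - m * s ^ 2) by (apply sqrt_sqrt; lra).
  assert (Ha0 : 0 <= a) by apply sqrt_pos.
  set (r := sqrt (1 - m)).
  assert (Hr : r * r = 1 - m) by (apply sqrt_sqrt; lra).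
  assert (Hr0 : 0 < r) by (apply sqrt_lt_R0; lra).
  assert (HaC : C <= a) by nra.
  assert (Har : r <= a) by nra.
  assert (Hgap : a - C <= r * s ^ 2) by nra.
  replace (a / (1 + b2 * s ^ 2) - C / (1 + b2 * s ^ 2)) with ((a - C) / (1 + b2 * s ^ 2))
    by (field; lra).
  rewrite Rabs_right by (apply Rle_ge, Rle_mult_inv_pos; lra).
  apply Rle_trans with (r * s ^ 2 / (1 + b2 * s ^ 2)).
  - apply Rmult_le_compat_r; [left; apply Rinv_0_lt_compat |]; lra.
  - apply (Rmult_le_reg_r (b2 * (1 + b2 * s ^ 2))); [nra |].
    field_simplify; lra.
Qed.

Lemma RInt_cnoidal_integrand_approx m b2 : 0 < m < 1 -> 0 < b2 ->
  Rabs (RInt (cnoidal_integrand m b2) (- (PI / 2)) (PI / 2) - 2 * atan (sqrt b2) / sqrt b2)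
    <= PI * (sqrt (1 - m) / b2).
Proof.
  intros Hm Hb. pose proof PI_RGT_0.
  set (k := fun p => cos p / (1 + b2 * sin p ^ 2)).
  assert (Hk : ex_RInt k (- (PI / 2)) (PI / 2)) by (eexists; apply is_RInt_cos_div, Hb).
  assert (Hj : ex_RInt (cnoidal_integrand m b2) (- (PI / 2)) (PI / 2))
    by (apply ex_RInt_cnoidal_integrand; lra).
  rewrite <- (is_RInt_unique _ _ _ _ (is_RInt_cos_div b2 Hb)).
  pose proof (RInt_minus (V := R_CompleteNormedModule) _ _ _ _ Hj Hk) as E.
  unfold minus, plus, opp in E; simpl in E. fold k. unfold Rminus at 1. rewrite <- E.
  eapply Rle_trans.
  - apply abs_RInt_le_const; [lra | | intros; apply cnoidal_integrand_sub_cos_le; auto].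
    apply (ex_RInt_minus (V := R_CompleteNormedModule)); assumption.
  - right; field. lra.
Qed.

(** * The wave parameters *)

Definition admissible (w c : R) : Prop := c ^ 2 / 4 < w \/ (w = c ^ 2 / 4 /\ 0 < c).

Definition rootA (w c e : R) : R := sqrt (Apoly w c e).

Section WaveParameters.

Variables w c : R.
Hypothesis Hwc : admissible w c.

Lemma admissible_sqrt : 0 < sqrt w /\ sqrt w * sqrt w = w /\ - 2 * sqrt w < c <= 2 * sqrt w.
Proof.
  assert (Hw : 0 < w) by (destruct Hwc as [Hlt | [Heq Hc]]; nra).
  pose proof (sqrt_lt_R0 w Hw). pose proof (sqrt_sqrt w (Rlt_le _ _ Hw)).
  destruct Hwc as [Hlt | [Heq Hc]]; repeat split; auto; nra.
Qed.

Lemma alpha0_bounds : 0 < alpha0 w c < alpha1 w c.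
Proof.
  destruct admissible_sqrt as (? & ? & ? & ?). unfold alpha0, alpha1.
  set (S0 := sqrt (48 * w + 4 * c ^ 2)).
  assert (HS0 : S0 * S0 = 48 * w + 4 * c ^ 2) by (apply sqrt_sqrt; nra).
  assert (0 <= S0) by apply sqrt_pos. split; nra.
Qed.

Lemma alpha1_pos : 0 < alpha1 w c.
Proof. pose proof alpha0_bounds; lra. Qed.

Lemma Apoly_gt_sqr e : 0 < e < alpha1 w c -> (e - 4 * c) ^ 2 < Apoly w c e.
Proof. intros He. destruct admissible_sqrt as (? & ? & ? & ?). unfold alpha1, Apoly in *. nra. Qed.

Lemma rootA_bounds e : 0 < e < alpha1 w c ->
  rootA w c e * rootA w c e = Apoly w c e /\ Rabs (e - 4 * c) < rootA w c e.
Proof.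
  intros He. pose proof (Apoly_gt_sqr e He). pose proof (pow2_ge_0 (e - 4 * c)).
  unfold rootA. split; [apply sqrt_sqrt; lra |].
  rewrite <- sqrt_Rsqr_abs. apply sqrt_lt_1_alt. split; [apply Rle_0_sqr | unfold Rsqr; nra].
Qed.

Lemma eta_bounds e : 0 < e < alpha1 w c ->
  eta1 w c e < 0 < eta2 w c e /\ eta2 w c e - eta1 w c e = rootA w c e.
Proof.
  intros He. destruct (rootA_bounds e He) as [_ Habs].
  pose proof (Rle_abs (e - 4 * c)). pose proof (Rle_abs (- (e - 4 * c))). rewrite Rabs_Ropp in *.
  unfold eta1, eta2; fold (rootA w c e). repeat split; lra.
Qed.

Lemma eta2_lt e : alpha0 w c < e < alpha1 w c -> eta2 w c e < e.
Proof.
  intros He. pose proof alpha0_bounds.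
  destruct (rootA_bounds e ltac:(lra)) as [HA _].
  destruct admissible_sqrt as (? & ? & ? & ?).
  unfold eta2; fold (rootA w c e). unfold alpha0 in He. unfold Apoly in HA.
  set (S0 := sqrt (48 * w + 4 * c ^ 2)) in *.
  assert (HS0 : S0 * S0 = 48 * w + 4 * c ^ 2) by (apply sqrt_sqrt; nra).
  assert (0 <= S0) by apply sqrt_pos.
  assert (0 <= rootA w c e) by apply sqrt_pos.
  (* e > alpha0 is the larger root of 3 e^2 - 8 c e + 4 c^2 - 16 w *)
  assert (3 * e ^ 2 - 8 * c * e + 4 * c ^ 2 - 16 * w > 0) by nra.
  nra.
Qed.

Lemma ksq_eq e : 0 < e < alpha1 w c ->
  ksq w c e = - eta1 w c e * (e - eta2 w c e) / (e * rootA w c e).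
Proof. intros He. unfold ksq. rewrite (proj2 (eta_bounds e He)). reflexivity. Qed.

Lemma ksq_lt_1 e : 0 < e < alpha1 w c -> ksq w c e < 1.
Proof.
  intros He. destruct (eta_bounds e He) as [[H1 H2] H3].
  assert (0 < e * rootA w c e) by nra.
  rewrite ksq_eq by exact He.
  apply (Rmult_lt_reg_r (e * rootA w c e)); auto. field_simplify; nra.
Qed.

Lemma ksq_bounds e : alpha0 w c < e < alpha1 w c -> 0 < ksq w c e < 1.
Proof.
  intros He. pose proof alpha0_bounds. pose proof (eta2_lt e He).
  destruct (eta_bounds e ltac:(lra)) as [[H1 H2] H3].
  split; [| apply ksq_lt_1; lra].
  rewrite ksq_eq by lra. apply Rdiv_lt_0_compat; nra.
Qed.

Lemma one_minus_ksq e : 0 < e < alpha1 w c ->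
  1 - ksq w c e = eta2 w c e * (e - eta1 w c e) / (e * rootA w c e).
Proof.
  intros He. destruct (eta_bounds e He) as [[H1 H2] H3].
  rewrite ksq_eq by exact He. field_simplify_eq; [rewrite <- H3; ring | nra].
Qed.

Lemma betasq_eq e : 0 < e < alpha1 w c -> betasq w c e = (e - eta2 w c e) / rootA w c e.
Proof.
  intros He. destruct (eta_bounds e He) as [[H1 H2] H3].
  unfold betasq. rewrite ksq_eq by exact He. field. lra.
Qed.

Lemma betasq_pos e : alpha0 w c < e < alpha1 w c -> 0 < betasq w c e.
Proof.
  intros He. pose proof alpha0_bounds. pose proof (eta2_lt e He).
  destruct (eta_bounds e ltac:(lra)) as [[H1 H2] H3].
  rewrite betasq_eq by lra. apply Rdiv_lt_0_compat; lra.
Qed.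

Lemma gpar_eq e : 0 < e < alpha1 w c -> gpar w c e = 2 / sqrt (e * rootA w c e).
Proof. intros He. unfold gpar. rewrite (proj2 (eta_bounds e He)). reflexivity. Qed.

Lemma gpar_pos e : 0 < e < alpha1 w c -> 0 < gpar w c e.
Proof.
  intros He. destruct (eta_bounds e He) as [[H1 H2] H3].
  rewrite gpar_eq by exact He. apply Rdiv_lt_0_compat; [lra |]. apply sqrt_lt_R0. nra.
Qed.

Lemma rootA_alpha1 : rootA w c (alpha1 w c) = 4 * sqrt w - 2 * c.
Proof.
  destruct admissible_sqrt as (? & ? & ? & ?).
  unfold rootA, Apoly, alpha1. rewrite <- (sqrt_Rsqr (4 * sqrt w - 2 * c)) by lra.
  f_equal. unfold Rsqr. nra.
Qed.

Lemma eta2_alpha1 : eta2 w c (alpha1 w c) = 0.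
Proof. unfold eta2. fold (rootA w c (alpha1 w c)). rewrite rootA_alpha1. unfold alpha1. field. Qed.

End WaveParameters.

(** * The period map *)

Lemma continuous_rootA w c e : continuous (rootA w c) e.
Proof. unfold rootA, Apoly. solve_continuous. Qed.

Lemma continuous_eta1 w c e : continuous (eta1 w c) e.
Proof. unfold eta1, Apoly. solve_continuous. Qed.

Lemma continuous_eta2 w c e : continuous (eta2 w c) e.
Proof. unfold eta2, Apoly. solve_continuous. Qed.

#[local] Hint Resolve continuous_rootA continuous_eta1 continuous_eta2 : continuity_atoms.

Section Period.

Variables w c : R.
Hypothesis Hwc : admissible w c.

Lemma continuous_Tper e : 0 < e < alpha1 w c -> continuous (Tper w c) e.
Proof.
  intros He. destruct (eta_bounds w c Hwc e He) as [[H1 H2] H3].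
  assert (Hden : 0 < e * (eta2 w c e - eta1 w c e)) by nra.
  unfold Tper. apply (continuous_mult (fun e => 4 * gpar w c e)).
  - unfold gpar. solve_continuous. apply Rgt_not_eq, sqrt_lt_R0; lra.
  - apply (continuous_comp (ksq w c) ellipK).
    + unfold ksq. solve_continuous. apply Rgt_not_eq; lra.
    + apply continuous_ellipK, ksq_lt_1; auto.
Qed.

Lemma Tper_ge_ln e : alpha0 w c < e < alpha1 w c ->
  4 * gpar w c e * (- ln (sqrt (1 - ksq w c e))) <= Tper w c e.
Proof.
  intros He. pose proof (gpar_pos w c Hwc e ltac:(pose proof (alpha0_bounds w c Hwc); lra)).
  unfold Tper. apply Rmult_le_compat_l; [lra |].
  apply ellipK_ge_ln, ksq_bounds; auto.
Qed.

Lemma Tper_ge_PI e : alpha0 w c < e < alpha1 w c -> 2 * PI * gpar w c e <= Tper w c e.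
Proof.
  intros He. pose proof (gpar_pos w c Hwc e ltac:(pose proof (alpha0_bounds w c Hwc); lra)).
  pose proof (ksq_bounds w c Hwc e He).
  pose proof (ellipK_ge_PI2 (ksq w c e) ltac:(lra)).
  unfold Tper. nra.
Qed.

(* Near alpha1, either 1 - k^2 -> 0 and K(k) blows up (c < 2 sqrt w),
   or e (eta2 - eta1) -> 0 and g blows up (c = 2 sqrt w). *)
Lemma Tper_unbounded_nondegenerate B a : c < 2 * sqrt w -> alpha0 w c <= a < alpha1 w c ->
  exists e, a < e < alpha1 w c /\ B < Tper w c e.
Proof.
  intros Hnd Ha. pose proof (alpha0_bounds w c Hwc). pose proof (Rabs_pos B).
  pose proof (rootA_alpha1 w c Hwc) as HA1. pose proof (eta2_alpha1 w c Hwc) as He2.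
  set (g1 := 2 / sqrt (alpha1 w c * rootA w c (alpha1 w c))).
  assert (Hden : 0 < alpha1 w c * rootA w c (alpha1 w c)) by (rewrite HA1; nra).
  assert (Hg1 : 0 < g1) by (apply Rdiv_lt_0_compat; [lra | apply sqrt_lt_R0; lra]).
  set (X := Rabs B / (2 * g1) + 1).
  assert (HX : 0 < X) by (unfold X; pose proof (Rle_mult_inv_pos (Rabs B) (2 * g1)); nra).
  set (U := fun e => eta2 w c e * (e - eta1 w c e) / (e * rootA w c e)).
  assert (HU : locally (alpha1 w c) (fun e => sqrt (U e) < exp (- X))).
  { apply (continuous_locally_lt (fun e => sqrt (U e))).
    - unfold U. solve_continuous. apply Rgt_not_eq; lra.
    - unfold U. rewrite He2, Rmult_0_l, Rdiv_0_l, sqrt_0. apply exp_pos. }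
  assert (HG : locally (alpha1 w c) (fun e => g1 / 2 < 2 / sqrt (e * rootA w c e))).
  { apply (continuous_locally_gt (fun e => 2 / sqrt (e * rootA w c e))); [| cbv beta; fold g1; lra].
    solve_continuous. apply Rgt_not_eq, sqrt_lt_R0; lra. }
  destruct (locally_left_point _ a (alpha1 w c) (proj2 Ha) (filter_and _ _ HU HG))
    as [e [He [PU PG]]].
  exists e; split; [exact He |].
  pose proof (Tper_ge_ln e ltac:(lra)) as HT.
  rewrite gpar_eq, one_minus_ksq in HT by (try exact Hwc; lra). fold (U e) in HT.
  assert (Hln : X < - ln (sqrt (U e))).
  { assert (0 < sqrt (U e)).
    { unfold U. rewrite <- one_minus_ksq by (try exact Hwc; lra).
      apply sqrt_lt_R0. pose proof (ksq_bounds w c Hwc e ltac:(lra)). lra. }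
    assert (ln (sqrt (U e)) < - X) by (rewrite <- (ln_exp (- X)); apply ln_increasing; auto).
    lra. }
  assert (Rabs B < 2 * g1 * X) by (unfold X; field_simplify; lra).
  pose proof (Rle_abs B). nra.
Qed.

Lemma Tper_unbounded_degenerate B a : c = 2 * sqrt w -> alpha0 w c <= a < alpha1 w c ->
  exists e, a < e < alpha1 w c /\ B < Tper w c e.
Proof.
  intros Hdeg Ha. pose proof (alpha0_bounds w c Hwc). pose proof (Rabs_pos B). pose proof PI_RGT_0.
  assert (HA0 : rootA w c (alpha1 w c) = 0) by (rewrite rootA_alpha1 by exact Hwc; lra).
  set (eps := 4 * PI / (Rabs B + 1)).
  assert (Heps : 0 < eps) by (apply Rdiv_lt_0_compat; lra).
  assert (HV : locally (alpha1 w c) (fun e => sqrt (e * rootA w c e) < eps)).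
  { apply (continuous_locally_lt (fun e => sqrt (e * rootA w c e))); [solve_continuous |].
    rewrite HA0, Rmult_0_r, sqrt_0. exact Heps. }
  destruct (locally_left_point _ a (alpha1 w c) (proj2 Ha) HV) as [e [He PV]].
  exists e; split; [exact He |].
  pose proof (Tper_ge_PI e ltac:(lra)) as HT.
  rewrite gpar_eq in HT by (try exact Hwc; lra).
  destruct (eta_bounds w c Hwc e ltac:(lra)) as [[He1 He2] He3].
  assert (HV0 : 0 < sqrt (e * rootA w c e)) by (apply sqrt_lt_R0; nra).
  assert (Rabs B + 1 < 4 * PI / sqrt (e * rootA w c e)).
  { replace (Rabs B + 1) with (4 * PI / eps) by (unfold eps; field; lra).
    apply Rmult_lt_compat_l; [lra |]. apply Rinv_lt_contravar; nra. }
  assert (2 * PI * (2 / sqrt (e * rootA w c e)) = 4 * PI / sqrt (e * rootA w c e))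
    by (field; lra).
  pose proof (Rle_abs B). lra.
Qed.

Lemma Tper_unbounded B a : alpha0 w c <= a < alpha1 w c ->
  exists e, a < e < alpha1 w c /\ B < Tper w c e.
Proof.
  destruct (admissible_sqrt w c Hwc) as (_ & _ & _ & Hc).
  destruct (Rlt_le_dec c (2 * sqrt w)).
  - apply Tper_unbounded_nondegenerate; assumption.
  - apply Tper_unbounded_degenerate; lra.
Qed.

Lemma Tper_reaches a y : alpha0 w c < a < alpha1 w c -> Tper w c a < y ->
  exists e, a < e < alpha1 w c /\ Tper w c e = y.
Proof.
  intros Ha Hy. pose proof (alpha0_bounds w c Hwc).
  destruct (Tper_unbounded y a ltac:(lra)) as [b [Hb HTb]].
  destruct (Ranalysis5.IVT_interv (fun x => Tper w c x - y) a b) as [z [Hz Hz2]];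
    [| lra | lra | lra |].
  - intros x Hx. apply continuity_pt_filterlim.
    apply (continuous_minus (Tper w c) (fun _ => y)); [| apply continuous_const].
    apply continuous_Tper. lra.
  - assert (z <> a) by (intros ->; lra).
    exists z. split; lra.
Qed.

Lemma eta3L_spec L : (exists a, alpha0 w c < a < alpha1 w c /\ Tper w c a < 2 * L) ->
  alpha0 w c < eta3L w c L < alpha1 w c /\ Tper w c (eta3L w c L) = 2 * L.
Proof.
  intros [a [Ha HT]].
  apply (epsilon_spec (inhabits 0) (fun e => alpha0 w c < e < alpha1 w c /\ Tper w c e = 2 * L)).
  destruct (Tper_reaches a (2 * L) Ha HT) as [e [He HTe]].
  exists e. split; [lra | exact HTe].
Qed.

(* Once 2L exceeds the maximum of T on [alpha0, b], the solution eta3 lies beyond b. *)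
Lemma eta3L_eventually_near b : b < alpha1 w c -> Rbar_locally p_infty (fun L =>
  alpha0 w c < eta3L w c L < alpha1 w c /\ Tper w c (eta3L w c L) = 2 * L /\ b < eta3L w c L).
Proof.
  intros Hb. pose proof (alpha0_bounds w c Hwc) as Ha01.
  set (b' := Rmax (alpha0 w c) b).
  assert (Hb1 : alpha0 w c <= b') by apply Rmax_l.
  assert (Hb3 : b <= b') by apply Rmax_r.
  assert (Hb2 : b' < alpha1 w c) by (apply Rmax_lub_lt; lra).
  set (a := (b' + alpha1 w c) / 2).
  destruct (continuous_ab_maj_consistent (Tper w c) (alpha0 w c) b' Hb1) as [Mx [HMx HMx2]].
  { intros x Hx. apply continuous_Tper. lra. }
  exists (Rmax (Tper w c Mx) (Tper w c a) / 2). intros L HL.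
  pose proof (Rmax_l (Tper w c Mx) (Tper w c a)). pose proof (Rmax_r (Tper w c Mx) (Tper w c a)).
  destruct (eta3L_spec L) as [He HT].
  { exists a. split; [unfold a; lra | lra]. }
  repeat split; try lra.
  destruct (Rlt_le_dec b' (eta3L w c L)) as [Hlt | Hle].
  - lra.
  - specialize (HMx (eta3L w c L) ltac:(lra)). lra.
Qed.

Lemma is_lim_eta3L : is_lim (eta3L w c) p_infty (alpha1 w c).
Proof.
  apply is_lim_spec. intros eps.
  destruct (eta3L_eventually_near (alpha1 w c - eps)) as [M HM].
  { pose proof (cond_pos eps). lra. }
  exists M. intros L HL. destruct (HM L HL) as ([_ H1] & _ & H2).
  rewrite Rabs_left; lra.
Qed.

End Period.

(** * The limit of the periodic norms *)

(* [2 g eta3 * (2 atan beta / beta)] in a form that stays continuous at [alpha1], where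
   [beta] blows up when [c = 2 sqrt w]. *)
Definition main_term (w c e : R) : R :=
  8 * sqrt (e / (e - eta2 w c e))
    * (PI / 2 - atan (sqrt (rootA w c e / (e - eta2 w c e)))).

Definition error_term (w c e : R) : R :=
  4 * PI * sqrt (e / (e - eta2 w c e))
    * sqrt (eta2 w c e * (e - eta1 w c e) / (e * (e - eta2 w c e))).

Section PeriodicNorms.

Variables w c : R.
Hypothesis Hwc : admissible w c.

Lemma PhiL_sq_eq L e x : eta3L w c L = e -> alpha0 w c < e < alpha1 w c ->
  PhiL w c L x ^ 2 = e * jacobi_dn (x / (2 * gpar w c e)) (ksq w c e) ^ 2
                       / (1 + betasq w c e * jacobi_sn (x / (2 * gpar w c e)) (ksq w c e) ^ 2).
Proof.
  intros HL He. pose proof (alpha0_bounds w c Hwc).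
  pose proof (ksq_bounds w c Hwc e He). pose proof (betasq_pos w c Hwc e He).
  unfold PhiL. rewrite HL. apply pow2_sqrt.
  apply Rle_mult_inv_pos; [apply Rmult_le_pos; [lra | apply pow2_ge_0] |].
  apply sn_denominator_pos. lra.
Qed.

Lemma normL2_PhiL_sq_eq L e : eta3L w c L = e ->
  alpha0 w c < e < alpha1 w c -> Tper w c e = 2 * L ->
  normL2_PhiL_sq w c L
  = 2 * gpar w c e * e * RInt (cnoidal_integrand (ksq w c e) (betasq w c e)) (- (PI / 2)) (PI / 2).
Proof.
  intros HL He HT. pose proof (alpha0_bounds w c Hwc).
  pose proof (ksq_bounds w c Hwc e He). pose proof (betasq_pos w c Hwc e He).
  pose proof (gpar_pos w c Hwc e ltac:(lra)).
  unfold normL2_PhiL_sq. rewrite (RInt_ext _ _ _ _ (fun x _ => PhiL_sq_eq L e x HL He)).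
  replace L with (2 * gpar w c e * ellipK (ksq w c e)) by (unfold Tper in HT; lra).
  apply RInt_cnoidal_profile; lra.
Qed.

Section Identities.

Variable e : R.
Hypothesis He : alpha0 w c < e < alpha1 w c.

Lemma gpar_mul_div_sqrt_betasq :
  gpar w c e * e / sqrt (betasq w c e) = 2 * sqrt (e / (e - eta2 w c e)).
Proof.
  pose proof (alpha0_bounds w c Hwc). pose proof (eta2_lt w c Hwc e He).
  destruct (eta_bounds w c Hwc e ltac:(lra)) as [[H1 H2] H3].
  pose proof (betasq_pos w c Hwc e He) as Hb.
  assert (HeS : 0 < e * rootA w c e) by nra.
  pose proof (sqrt_lt_R0 _ Hb). pose proof (sqrt_sqrt _ (Rlt_le _ _ Hb)) as Hb2.
  pose proof (sqrt_lt_R0 _ HeS). pose proof (sqrt_sqrt _ (Rlt_le _ _ HeS)) as HeS2.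
  assert (Hed : 0 < e / (e - eta2 w c e)) by (apply Rdiv_lt_0_compat; lra).
  pose proof (sqrt_sqrt _ (Rlt_le _ _ Hed)) as Hed2. pose proof (sqrt_pos (e / (e - eta2 w c e))).
  rewrite (gpar_eq w c Hwc e) by lra.
  apply Rsqr_inj; unfold Rsqr; [apply Rle_mult_inv_pos; [apply Rmult_le_pos|]; try lra | lra |].
  - apply Rlt_le, Rdiv_lt_0_compat; lra.
  - transitivity (4 * e * e / ((sqrt (e * rootA w c e) * sqrt (e * rootA w c e))
                               * (sqrt (betasq w c e) * sqrt (betasq w c e))));
      [field; lra |].
    transitivity (4 * (sqrt (e / (e - eta2 w c e)) * sqrt (e / (e - eta2 w c e)))); [| ring].
    rewrite Hb2, HeS2, Hed2, (betasq_eq w c Hwc e) by lra. field. lra.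
Qed.

Lemma inv_sqrt_betasq :
  / sqrt (betasq w c e) = sqrt (rootA w c e / (e - eta2 w c e)).
Proof.
  pose proof (alpha0_bounds w c Hwc). pose proof (eta2_lt w c Hwc e He).
  destruct (eta_bounds w c Hwc e ltac:(lra)) as [[H1 H2] H3].
  rewrite (betasq_eq w c Hwc e), <- sqrt_inv by lra. f_equal. field. lra.
Qed.

Lemma main_term_eq :
  2 * gpar w c e * e * (2 * atan (sqrt (betasq w c e)) / sqrt (betasq w c e)) = main_term w c e.
Proof.
  pose proof (sqrt_lt_R0 _ (betasq_pos w c Hwc e He)).
  unfold main_term. rewrite <- inv_sqrt_betasq, atan_inv by lra.
  replace (8 * sqrt (e / (e - eta2 w c e))) with (4 * (2 * sqrt (e / (e - eta2 w c e)))) by ring.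
  rewrite <- gpar_mul_div_sqrt_betasq. field. lra.
Qed.

Lemma error_term_eq :
  2 * gpar w c e * e * (PI * (sqrt (1 - ksq w c e) / betasq w c e)) = error_term w c e.
Proof.
  pose proof (alpha0_bounds w c Hwc). pose proof (eta2_lt w c Hwc e He).
  destruct (eta_bounds w c Hwc e ltac:(lra)) as [[H1 H2] H3].
  pose proof (betasq_pos w c Hwc e He) as Hb.
  pose proof (sqrt_lt_R0 _ Hb). pose proof (sqrt_sqrt _ (Rlt_le _ _ Hb)) as Hb2.
  unfold error_term.
  replace (4 * PI * sqrt (e / (e - eta2 w c e))) with (2 * PI * (2 * sqrt (e / (e - eta2 w c e))))
    by ring.
  rewrite <- gpar_mul_div_sqrt_betasq.
  replace (eta2 w c e * (e - eta1 w c e) / (e * (e - eta2 w c e)))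
    with ((1 - ksq w c e) / betasq w c e)
    by (rewrite (one_minus_ksq w c Hwc e), (betasq_eq w c Hwc e) by lra; field; repeat split; lra).
  rewrite sqrt_div_alt by lra.
  replace (sqrt (1 - ksq w c e) / betasq w c e)
    with (sqrt (1 - ksq w c e) / (sqrt (betasq w c e) * sqrt (betasq w c e))) by now rewrite Hb2.
  field. lra.
Qed.

End Identities.

Lemma normL2_PhiL_sq_approx L e : eta3L w c L = e ->
  alpha0 w c < e < alpha1 w c -> Tper w c e = 2 * L ->
  Rabs (normL2_PhiL_sq w c L - main_term w c e) <= error_term w c e.
Proof.
  intros HL He HT. pose proof (alpha0_bounds w c Hwc).
  pose proof (gpar_pos w c Hwc e ltac:(lra)).
  rewrite normL2_PhiL_sq_eq with (e := e), <- main_term_eq, <- error_term_eq by auto.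
  rewrite <- Rmult_minus_distr_l, Rabs_mult, Rabs_right by nra.
  apply Rmult_le_compat_l; [nra |].
  apply RInt_cnoidal_integrand_approx; [apply ksq_bounds | apply betasq_pos]; auto.
Qed.

Lemma error_term_alpha1 : error_term w c (alpha1 w c) = 0.
Proof.
  unfold error_term. rewrite eta2_alpha1 by exact Hwc.
  rewrite Rmult_0_l, Rdiv_0_l, sqrt_0. ring.
Qed.

Lemma is_lim_normL2_PhiL_sq : is_lim (normL2_PhiL_sq w c) p_infty (main_term w c (alpha1 w c)).
Proof.
  pose proof (alpha1_pos w c Hwc). pose proof (eta2_alpha1 w c Hwc) as He2.
  assert (Hcomp : forall f, continuous f (alpha1 w c) ->
            is_lim (fun L => f (eta3L w c L)) p_infty (f (alpha1 w c)))
    by (intros f Hf; exact (filterlim_comp _ _ _ _ f _ _ _ (is_lim_eta3L w c Hwc) Hf)).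
  assert (Hmain : is_lim (fun L => main_term w c (eta3L w c L)) p_infty
                    (main_term w c (alpha1 w c))).
  { apply Hcomp. unfold main_term. solve_continuous; apply Rgt_not_eq; rewrite He2; lra. }
  assert (Herr : is_lim (fun L => error_term w c (eta3L w c L)) p_infty 0).
  { rewrite <- error_term_alpha1. apply Hcomp.
    unfold error_term. solve_continuous; apply Rgt_not_eq; rewrite He2; nra. }
  apply (is_lim_le_le_loc
    (fun L => main_term w c (eta3L w c L) - error_term w c (eta3L w c L))
    (fun L => main_term w c (eta3L w c L) + error_term w c (eta3L w c L))).
  - destruct (eta3L_eventually_near w c Hwc (alpha0 w c)) as [M HM];
      [apply alpha0_bounds, Hwc |].
    exists M. intros L HL. destruct (HM L HL) as (He & HT & _).
    pose proof (normL2_PhiL_sq_approx L _ eq_refl He HT) as Happrox.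
    apply Rabs_le_between' in Happrox. lra.
  - rewrite <- (Rminus_0_r (main_term w c (alpha1 w c))). apply is_lim_minus'; assumption.
  - rewrite <- (Rplus_0_r (main_term w c (alpha1 w c))). apply is_lim_plus'; assumption.
Qed.

Lemma main_term_alpha1 :
  main_term w c (alpha1 w c) = 8 * (PI / 2 - atan (sqrt ((4 * sqrt w - 2 * c) / alpha1 w c))).
Proof.
  pose proof (alpha1_pos w c Hwc).
  unfold main_term. rewrite eta2_alpha1, rootA_alpha1, Rminus_0_r, Rdiv_diag, sqrt_1 by (auto; lra).
  ring.
Qed.

End PeriodicNorms.

(** * The solitary waves *)

Lemma is_RInt_gen_antiderivative (F f : R -> R) la lb :
  (forall x, is_derive F x (f x)) -> (forall x, continuous f x) ->
  filterlim F (Rbar_locally m_infty) (locally la) ->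
  filterlim F (Rbar_locally p_infty) (locally lb) ->
  is_RInt_gen f (Rbar_locally m_infty) (Rbar_locally p_infty) (lb - la).
Proof.
  intros HD Hc Hm Hp.
  assert (HDe : forall x, Derive F x = f x) by (intros; apply is_derive_unique, HD).
  apply (is_RInt_gen_ext (Derive F)).
  - apply filter_forall. intros ab x _. apply HDe.
  - apply is_RInt_gen_Derive; auto; apply filter_forall; intros ab x _.
    + eexists; apply HD.
    + apply (continuous_ext f); auto.
Qed.

Lemma filterlim_scal_p_infty a : 0 < a ->
  filterlim (fun x => a * x) (Rbar_locally p_infty) (Rbar_locally p_infty).
Proof.
  intros Ha P [M HM]. exists (M / a). intros x Hx. apply HM.
  apply (Rmult_lt_compat_l a) in Hx; [| exact Ha].
  replace (a * (M / a)) with M in Hx by (field; lra). exact Hx.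
Qed.

Lemma filterlim_scal_m_infty a : 0 < a ->
  filterlim (fun x => a * x) (Rbar_locally m_infty) (Rbar_locally m_infty).
Proof.
  intros Ha P [M HM]. exists (M / a). intros x Hx. apply HM.
  apply (Rmult_lt_compat_l a) in Hx; [| exact Ha].
  replace (a * (M / a)) with M in Hx by (field; lra). exact Hx.
Qed.

Lemma filterlim_atan_p_infty : filterlim atan (Rbar_locally p_infty) (locally (PI / 2)).
Proof.
  assert (Hinv : filterlim (fun x => / x) (Rbar_locally p_infty) (locally 0)).
  { exact (is_lim_inv (fun x => x) p_infty p_infty (is_lim_id p_infty) ltac:(discriminate)). }
  apply (filterlim_ext_loc (fun x => PI / 2 - atan (/ x))).
  - exists 0. intros x Hx. rewrite atan_inv by exact Hx. ring.
  - replace (locally (PI / 2)) with (locally (PI / 2 - atan 0))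
      by (rewrite atan_0, Rminus_0_r; reflexivity).
    apply (filterlim_comp _ _ _ _ (fun t => PI / 2 - atan t) _ _ _ Hinv).
    change (continuous (fun t => PI / 2 - atan t) 0). solve_continuous.
Qed.

Lemma filterlim_atan_m_infty : filterlim atan (Rbar_locally m_infty) (locally (- (PI / 2))).
Proof.
  apply (filterlim_ext (fun x => - atan (- x))); [intros x; rewrite atan_opp; ring |].
  apply (filterlim_comp _ _ _ (fun x => - x) (fun t => - atan t) _ (Rbar_locally p_infty)).
  - exact (is_lim_opp _ _ _ (is_lim_id m_infty)).
  - apply (filterlim_comp _ _ _ atan Ropp _ (locally (PI / 2))); [exact filterlim_atan_p_infty |].
    change (continuous (fun t => - t) (PI / 2)). solve_continuous.
Qed.

Definition tanh_half (y : R) : R := (exp y - 1) / (exp y + 1).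

Lemma filterlim_tanh_half_m_infty : filterlim tanh_half (Rbar_locally m_infty) (locally (- 1)).
Proof.
  replace (locally (- 1)) with (locally ((fun t => (t - 1) / (t + 1)) 0)) by (f_equal; field).
  apply (filterlim_comp _ _ _ exp (fun t => (t - 1) / (t + 1)) _ (locally 0)).
  - exact is_lim_exp_m.
  - change (continuous (fun t => (t - 1) / (t + 1)) 0). solve_continuous. lra.
Qed.

Lemma filterlim_tanh_half_p_infty : filterlim tanh_half (Rbar_locally p_infty) (locally 1).
Proof.
  apply (filterlim_ext (fun y => - tanh_half (- y))).
  { intros y. unfold tanh_half. rewrite exp_Ropp. pose proof (exp_pos y). field. lra. }
  apply (filterlim_comp _ _ _ (fun y => - y) (fun t => - tanh_half t) _ (Rbar_locally m_infty)).
  - exact (is_lim_opp _ _ _ (is_lim_id p_infty)).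
  - replace (locally 1) with (locally (- (- 1))) by (f_equal; ring).
    apply (filterlim_comp _ _ _ tanh_half Ropp _ (locally (- 1)));
      [exact filterlim_tanh_half_m_infty |].
    change (continuous (fun t => - t) (- 1)). solve_continuous.
Qed.

Lemma filterlim_scal_comp (k : R) (g : R -> R) (F : (R -> Prop) -> Prop) (l : R) :
  filterlim g F (locally l) -> filterlim (fun x => k * g x) F (locally (k * l)).
Proof.
  intros Hg. apply (filterlim_comp _ _ _ g (fun t => k * t) _ _ _ Hg).
  change (continuous (fun t => k * t) l). solve_continuous.
Qed.

Lemma is_RInt_gen_Phi_sq_algebraic w c : w = c ^ 2 / 4 -> 0 < c ->
  is_RInt_gen (fun x => Phi w c x ^ 2) (Rbar_locally m_infty) (Rbar_locally p_infty)
    (main_term w c (alpha1 w c)).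
Proof.
  intros Hw Hc. assert (Hwc : admissible w c) by (right; auto).
  destruct (admissible_sqrt w c Hwc) as (Hs & Hs2 & _ & _).
  rewrite main_term_alpha1 by exact Hwc.
  replace (4 * sqrt w - 2 * c) with 0 by nra.
  rewrite Rdiv_0_l, sqrt_0, atan_0.
  replace (8 * (PI / 2 - 0)) with (4 * (PI / 2) - 4 * (- (PI / 2))) by ring.
  apply (is_RInt_gen_ext (fun x => 4 * c / ((c * x) ^ 2 + 1))).
  { apply filter_forall. intros ab x _. unfold Phi, Phi_sq.
    destruct (Rlt_dec (c ^ 2 / 4) w) as [Hlt | _]; [lra |].
    pose proof (pow2_ge_0 (c * x)).
    rewrite pow2_sqrt; [reflexivity | apply Rle_mult_inv_pos; lra]. }
  apply (is_RInt_gen_antiderivative (fun x => 4 * atan (c * x))).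
  - intros x. pose proof (pow2_ge_0 (c * x)). auto_derive; [exact I |]. field. simpl in *. nra.
  - intros x. pose proof (pow2_ge_0 (c * x)). solve_continuous. lra.
  - apply filterlim_scal_comp.
    exact (filterlim_comp _ _ _ _ _ _ _ _ (filterlim_scal_m_infty c Hc) filterlim_atan_m_infty).
  - apply filterlim_scal_comp.
    exact (filterlim_comp _ _ _ _ _ _ _ _ (filterlim_scal_p_infty c Hc) filterlim_atan_p_infty).
Qed.

Lemma cosh_ge_1 x : 1 <= cosh x.
Proof.
  unfold cosh. rewrite exp_Ropp. pose proof (exp_pos x).
  assert (0 <= (exp x - 1) * (exp x - 1) / exp x)
    by (apply Rle_mult_inv_pos; [apply Rle_0_sqr | lra]).
  replace ((exp x + / exp x) / 2) with (1 + (exp x - 1) * (exp x - 1) / exp x / 2)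
    by (field; lra).
  lra.
Qed.

Lemma is_derive_atan_tanh_half s c a x : 0 < s -> - 2 * s < c < 2 * s -> 0 < a ->
  a * a = 4 * (s * s) - c ^ 2 ->
  is_derive (fun x => 4 * atan (a / (2 * s - c) * tanh_half (a * x))) x
    ((4 * (s * s) - c ^ 2) / (s * (cosh (a * x) - c / (2 * s)))).
Proof.
  intros Hs Hc Ha Ha2. pose proof (exp_pos (a * x)) as HE.
  unfold tanh_half. auto_derive; [lra |].
  unfold cosh. rewrite exp_Ropp. set (E := exp (a * x)) in *.
  set (d := 2 * s - c).
  assert (Hd : 0 < d) by (unfold d; lra).
  assert (Hak : a * a = d * (2 * s + c)) by (unfold d; rewrite Ha2; ring).
  assert (H1 : 0 < s * (E * E + 1) - c * E).
  { replace (s * (E * E + 1) - c * E) with (s * ((E - 1) * (E - 1)) + d * E) by (unfold d; ring).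
    pose proof (Rle_0_sqr (E - 1)). unfold Rsqr in *. nra. }
  assert (H2 : 0 < d * d * ((E + 1) * (E + 1)) + a * a * ((E - 1) * (E - 1))).
  { pose proof (Rle_0_sqr (E - 1)). unfold Rsqr in *. nra. }
  transitivity (8 * (a * a) * E * d / (d * d * ((E + 1) * (E + 1)) + a * a * ((E - 1) * (E - 1))));
    [field; repeat split; lra |].
  transitivity (2 * E * (a * a) / (s * (E * E + 1) - c * E)).
  - rewrite Hak in H2 |- *. unfold d in H2 |- *. field. split; lra.
  - rewrite Ha2. field. repeat split; lra.
Qed.

Lemma main_term_alpha1_sech w c : c ^ 2 / 4 < w ->
  main_term w c (alpha1 w c) = 8 * atan (sqrt (4 * w - c ^ 2) / (2 * sqrt w - c)).
Proof.
  intros Hw. assert (Hwc : admissible w c) by (left; exact Hw).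
  destruct (admissible_sqrt w c Hwc) as (Hs & Hs2 & Hc1 & _).
  set (a := sqrt (4 * w - c ^ 2)).
  assert (Ha : 0 < a) by (apply sqrt_lt_R0; lra).
  assert (Ha2 : a * a = 4 * w - c ^ 2) by (apply sqrt_sqrt; lra).
  set (s := sqrt w) in *.
  assert (Hc2 : c < 2 * s) by nra.
  assert (Hbe : 0 < a / (2 * s - c)) by (apply Rdiv_lt_0_compat; lra).
  assert (Hinv : sqrt ((4 * s - 2 * c) / alpha1 w c) = / (a / (2 * s - c))).
  { unfold alpha1. fold s. apply Rsqr_inj; [apply sqrt_pos | left; apply Rinv_0_lt_compat; lra |].
    unfold Rsqr. rewrite sqrt_sqrt by (apply Rlt_le, Rdiv_lt_0_compat; lra).
    field_simplify_eq; [| repeat split; lra].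
    replace (a ^ 2) with (a * a) by ring. rewrite Ha2, <- Hs2. ring. }
  rewrite main_term_alpha1 by exact Hwc. fold s. rewrite Hinv, atan_inv by exact Hbe. ring.
Qed.

Lemma is_RInt_gen_Phi_sq_sech w c : c ^ 2 / 4 < w ->
  is_RInt_gen (fun x => Phi w c x ^ 2) (Rbar_locally m_infty) (Rbar_locally p_infty)
    (main_term w c (alpha1 w c)).
Proof.
  intros Hw. rewrite main_term_alpha1_sech by exact Hw.
  assert (Hwc : admissible w c) by (left; exact Hw).
  destruct (admissible_sqrt w c Hwc) as (Hs & Hs2 & Hc1 & _).
  set (s := sqrt w) in *.
  assert (Hc2 : c < 2 * s) by nra.
  set (a := sqrt (4 * w - c ^ 2)).
  assert (Ha : 0 < a) by (apply sqrt_lt_R0; lra).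
  assert (Ha2 : a * a = 4 * (s * s) - c ^ 2) by (unfold a; rewrite sqrt_sqrt; lra).
  set (be := a / (2 * s - c)).
  replace (8 * atan be) with (4 * atan (be * 1) - 4 * atan (be * - 1))
    by (replace (be * - 1) with (- be) by ring; rewrite Rmult_1_r, atan_opp; ring).
  assert (Hcosh : forall x, 0 < cosh (a * x) - c / (2 * s)).
  { intros x. pose proof (cosh_ge_1 (a * x)).
    assert (c / (2 * s) < 1) by (apply (Rmult_lt_reg_r (2 * s)); [lra | field_simplify; lra]).
    lra. }
  apply (is_RInt_gen_ext (fun x => (4 * (s * s) - c ^ 2) / (s * (cosh (a * x) - c / (2 * s))))).
  { apply filter_forall. intros ab x _. unfold Phi, Phi_sq.
    destruct (Rlt_dec (c ^ 2 / 4) w) as [_ | Hn]; [| lra].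
    fold s a. rewrite Hs2. pose proof (Hcosh x).
    rewrite pow2_sqrt; [reflexivity |]. apply Rle_mult_inv_pos; [lra | nra]. }
  apply (is_RInt_gen_antiderivative (fun x => 4 * atan (be * tanh_half (a * x)))).
  - intros x. apply is_derive_atan_tanh_half; auto.
  - intros x. pose proof (Hcosh x). unfold cosh in *. solve_continuous.
    apply Rgt_not_eq. nra.
  - apply (filterlim_comp _ _ _ (fun x => tanh_half (a * x)) (fun t => 4 * atan (be * t))
             _ (locally (- 1))).
    + exact (filterlim_comp _ _ _ _ _ _ _ _
               (filterlim_scal_m_infty a Ha) filterlim_tanh_half_m_infty).
    + change (continuous (fun t => 4 * atan (be * t)) (- 1)). solve_continuous.
  - apply (filterlim_comp _ _ _ (fun x => tanh_half (a * x)) (fun t => 4 * atan (be * t))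
             _ (locally 1)).
    + exact (filterlim_comp _ _ _ _ _ _ _ _
               (filterlim_scal_p_infty a Ha) filterlim_tanh_half_p_infty).
    + change (continuous (fun t => 4 * atan (be * t)) 1). solve_continuous.
Qed.

Theorem theorem4p1 (w c : R)
  (Hwc : c ^ 2 / 4 < w \/ (w = c ^ 2 / 4 /\ 0 < c)) :
  exists l : R,
    is_RInt_gen (fun x => (Phi w c x) ^ 2)
      (Rbar_locally m_infty) (Rbar_locally p_infty) l /\
    is_lim (fun L => normL2_PhiL_sq w c L) p_infty l.
Proof.
  exists (main_term w c (alpha1 w c)). split.
  - destruct Hwc as [Hw | [Hw Hc]].
    + apply is_RInt_gen_Phi_sq_sech, Hw.
    + apply is_RInt_gen_Phi_sq_algebraic; assumption.
  - apply is_lim_normL2_PhiL_sq, Hwc.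
Qed.
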